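(* Let $g:\mathbb{R}^n\to\mathbb{R}^n$ be convex, order-preserving and additively homogeneous, and assume $g$ admits at least one harmonic vector. Let $C$ be the set of critical nodes of $g$ and $N=[n]\setminus C$. Let $u\in\mathbb{R}^n$ be super-harmonic for $g$ ($g(u)\le u$). Then each of the following conditions defines uniquely a vector $v\in\mathbb{R}^n$, and all four define the same vector: (i) $v=\lim_{k\to\infty} g^k(u)$ (the limit exists); (ii) $v$ is harmonic for $g$ and $v_C=u_C$; (iii) $v_C=u_C$ and $v_N$ is a fixed point of the map $h:\mathbb{R}^N\to\mathbb{R}^N$, $h(y)=\big(g(\imath_N(y,u_C))\big)_N$; (iv) $v$ is the smallest super-harmonic vector of $g$ that dominates $u$ on $C$ (i.e. with $v_C\ge u_C$).
   Context: $[n]=\{1,\dots,n\}$, $g^k$ is the $k$-th iterate of $g$. A map $g:\mathbb{R}^n\to\mathbb{R}^n$ is order-preserving if $x\le y$ (coordinatewise) implies $g(x)\le g(y)$; additively homogeneous if $g(\lambda+x)=\lambda+g(x)$ for all $\lambda\in\mathbb{R}$, $x\in\mathbb{R}^n$; convex if each coordinate $g_i$ is convex. A vector $u$ is harmonic for $g$ if $g(u)=u$ and super-harmonic if $g(u)\le u$. The subdifferential of $g$ at $u$ is $\partial g(u)=\{M\in\mathbb{R}^{n\times n}: g(x)-g(u)\ge M(x-u)\ \forall x\}$ (its elements are stochastic matrices here). For $I\subseteq[n]$, $x_I$ denotes the restriction of $x$ to $I$, $M_{IJ}$ the $I\times J$ submatrix, and $\imath_N(y,z)$ the vector of $\mathbb{R}^n$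 with $N$-coordinates $y$ and $C$-coordinates $z$. A recurrence class of $M$ is a final communication class $F$ of $M$ (strongly connected class of the graph of nonzero entries with no arc leaving it) with $M_{FF}$ stochastic. A node is critical for $g$ if it belongs to a recurrence class of some $M\in\partial g(w)$, where $w$ is a harmonic vector of $g$; this set does not depend on the choice of $w$. *)

From HB Require Import structures.
From mathcomp Require Import all_boot all_order all_algebra.
From mathcomp Require Import all_classical all_reals all_analysis.
Set Implicit Arguments. Unset Strict Implicit. Unset Printing Implicit Defensive.
Import Order.TTheory GRing.Theory Num.Theory.
Local Open Scope ring_scope.

Section Defs.
Variables (R : realType) (n : nat).
Notation vec := ('I_n -> R).

Definition vle (x y : vec) : Prop := forall i, x i <= y i.

Definition order_preserving (g : vec -> vec) : Prop :=
  forall x y, vle x y -> vle (g x) (g y).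

Definition add_homogeneous (g : vec -> vec) : Prop :=
  forall (lam : R) (x : vec), g (fun i => lam + x i) = (fun i => lam + g x i).

Definition convex_map (g : vec -> vec) : Prop :=
  forall (t : R) (x y : vec) (i : 'I_n), 0 <= t -> t <= 1 ->
    g (fun j => t * x j + (1 - t) * y j) i <= t * g x i + (1 - t) * g y i.

Definition is_harmonic (g : vec -> vec) (u : vec) : Prop := g u = u.
Definition is_superharmonic (g : vec -> vec) (u : vec) : Prop := vle (g u) u.

Definition subdiff (g : vec -> vec) (u : vec) (M : 'M[R]_n) : Prop :=
  forall (x : vec) (i : 'I_n), \sum_j M i j * (x j - u j) <= g x i - g u i.

Definition mx_graph (M : 'M[R]_n) : rel 'I_n := fun i j => M i j != 0.

Definition comm_class (M : 'M[R]_n) (F : {set 'I_n}) : Prop :=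
  exists i, F = [set j | connect (mx_graph M) i j && connect (mx_graph M) j i].

Definition final_set (M : 'M[R]_n) (F : {set 'I_n}) : Prop :=
  forall i j, i \in F -> mx_graph M i j -> j \in F.

Definition stochastic_on (M : 'M[R]_n) (F : {set 'I_n}) : Prop :=
  (forall i j, i \in F -> j \in F -> 0 <= M i j) /\
  (forall i, i \in F -> \sum_(j in F) M i j = 1).

Definition recurrence_class (M : 'M[R]_n) (F : {set 'I_n}) : Prop :=
  [/\ comm_class M F, final_set M F & stochastic_on M F].

Definition critical_wrt (g : vec -> vec) (w : vec) (i : 'I_n) : Prop :=
  exists (M : 'M[R]_n) (F : {set 'I_n}),
    [/\ subdiff g w M, recurrence_class M F & i \in F].

(* \imath_N(y, z): N-coordinates from y, C-coordinates from z *)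
Definition imath (C : 'I_n -> Prop) (y z : vec) : vec :=
  fun i => if `[< C i >] then z i else y i.

End Defs.
Arguments vle {R n}.
Arguments order_preserving {R n}.
Arguments add_homogeneous {R n}.
Arguments convex_map {R n}.
Arguments is_harmonic {R n}.
Arguments is_superharmonic {R n}.
Arguments subdiff {R n}.
Arguments mx_graph {R n}.
Arguments comm_class {R n}.
Arguments final_set {R n}.
Arguments stochastic_on {R n}.
Arguments recurrence_class {R n}.
Arguments critical_wrt {R n}.
Arguments imath {R n}.

From HB Require Import structures.
From mathcomp Require Import all_boot all_order all_algebra.
From mathcomp Require Import all_classical all_reals all_analysis.
From mathcomp Require Import ring lra.
Set Implicit Arguments. Unset Strict Implicit. Unset Printing Implicit Defensive.
Import Order.TTheory GRing.Theory Num.Theory numFieldNormedType.Exports.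
Local Open Scope ring_scope.

(* Convexity gives subgradients, and monotonicity with additive homogeneity
   makes them stochastic matrices.  On a recurrence class of a subgradient a
   super-harmonic difference is constant (minimum principle); hence g(u) = u on
   critical nodes for every super-harmonic u, and a recurrence class of a
   subgradient taken at any vector fixed on that class is critical.  Off the
   critical nodes a maximum principle holds, because a positive maximum would
   propagate along a closed set of noncritical nodes, which contains a
   recurrence class.  So a harmonic vector lies below every super-harmonic
   vector dominating it on C, and above every vector equal to it on C and fixed
   off C.  The iterates g^k(u) decrease, are bounded below by a shift of w and
   converge to a harmonic vector equal to u on C, which is then the vector
   characterised by each of (i)-(iv). *)

Lemma imath_id (R : realType) (n : nat) (P : 'I_n -> Prop) (y z : 'I_n -> R) :
  (forall i, P i -> y i = z i) -> imath P y z = y.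
Proof. by move=> yz; apply/funext => i; rewrite /imath; case: asboolP => // /yz. Qed.

Section ConvexSubgradient.
Local Open Scope classical_set_scope.
Variables (R : realType) (n : nat) (f : ('I_n -> R) -> R).
Hypothesis f_convex : forall (t : R) (x y : 'I_n -> R), 0 <= t -> t <= 1 ->
  f (fun j => t * x j + (1 - t) * y j) <= t * f x + (1 - t) * f y.
Variable a : 'I_n -> R.

Definition supported_below k (x : 'I_n -> R) := forall j : 'I_n, (k <= j)%N -> x j = 0.

Definition subgradient_below k (m : 'I_n -> R) := forall x, supported_below k x ->
  \sum_j m j * x j <= f (fun j => a j + x j) - f a.

Lemma subgradient_below0 : subgradient_below 0 (fun _ => 0).
Proof.
move=> x x0; have -> : (fun j => a j + x j) = a by apply/funext => j; rewrite x0 // addr0.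
by rewrite subrr big1 // => j _; rewrite mul0r.
Qed.

Section Extension.
Variables (k : nat) (k_lt_n : (k < n)%N) (m : 'I_n -> R).
Hypothesis m_sub : subgradient_below k m.
Let e : 'I_n := Ordinal k_lt_n.
Let shift x s := fun j : 'I_n => a j + x j + s * (j == e)%:R.
Let gap x s := f (shift x s) - f a - \sum_j m j * x j.

Lemma gap_combination x y (s t : R) : supported_below k x -> supported_below k y ->
  0 < s -> 0 < t -> 0 <= t * gap x s + s * gap y (- t).
Proof.
move=> x0 y0 s0 t0; pose l := t / (s + t).
have st0 : 0 < s + t by rewrite addr_gt0.
have l0 : 0 <= l by rewrite divr_ge0 // ltW.
have l1 : l <= 1 by rewrite ler_pdivrMr // mul1r lerDr ltW.
pose z := fun j => l * x j + (1 - l) * y j.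
have z0 : supported_below k z by move=> j kj; rewrite /z x0 // y0 // !mulr0 addr0.
have convex_shift := @f_convex l (shift x s) (shift y (- t)) l0 l1.
have shift_z : (fun j => l * shift x s j + (1 - l) * shift y (- t) j) = (fun j => a j + z j).
  by apply/funext => j; rewrite /shift /z /l; field; rewrite gt_eqF.
have sum_z : \sum_j m j * z j = l * \sum_j m j * x j + (1 - l) * \sum_j m j * y j.
  by rewrite !mulr_sumr -big_split /=; apply: eq_bigr => j _; rewrite /z; ring.
have sub_z := m_sub z0; rewrite sum_z in sub_z; rewrite shift_z in convex_shift.
move: convex_shift sub_z; rewrite /gap.
set A := f (shift x s); set B := f (shift y (- t)).
set X := \sum_j m j * x j; set Y := \sum_j m j * y j => convex_shift sub_z.
have -> : t * (A - f a - X) + s * (B - f a - Y) =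
    (s + t) * (l * A + (1 - l) * B - f a - (l * X + (1 - l) * Y)).
  by rewrite /l; field; rewrite gt_eqF.
by apply: mulr_ge0; [exact: ltW | lra].
Qed.

(* The one-dimensional Hahn-Banach step: [sup L] separates the left and right
   difference quotients of [gap] along [e]. *)
Lemma gap_slope_bound : exists c, forall x s, supported_below k x -> c * s <= gap x s.
Proof.
have slope_le x y (s t : R) : supported_below k x -> supported_below k y -> 0 < s -> 0 < t ->
    - gap y (- t) / t <= gap x s / s.
  move=> x0 y0 s0 t0; have := gap_combination x0 y0 s0 t0.
  by rewrite ler_pdivlMr // mulrAC ler_pdivrMr //; nra.
pose L := [set z | exists y t, [/\ supported_below k y, 0 < t & z = - gap y (- t) / t]].
have L_ub x s : supported_below k x -> 0 < s -> ubound L (gap x s / s).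
  by move=> x0 s0 _ [y [t [y0 t0 ->]]]; exact: slope_le.
have L_sup : has_sup L.
  split; first by exists (- gap (fun _ => 0) (- 1) / 1), (fun _ => 0), 1.
  by exists (gap (fun _ => 0) 1 / 1); exact: L_ub.
exists (sup L) => x s x0; case: (ltrgtP s 0) => [s_lt0|s_gt0|->].
- have : L (- gap x (- - s) / - s) by exists x, (- s); rewrite oppr_gt0.
  move=> /(sup_upper_bound L_sup); rewrite opprK ler_pdivrMr ?oppr_gt0 //; lra.
- by rewrite -ler_pdivlMr //; apply: ge_sup; [case: L_sup | exact: L_ub].
- rewrite /gap; have -> : shift x 0 = (fun j => a j + x j).
    by apply/funext => j; rewrite /shift mul0r addr0.
  by rewrite mulr0 subr_ge0; exact: m_sub.
Qed.

Lemma subgradient_below_succ : exists m', subgradient_below k.+1 m'.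
Proof.
have [c c_bound] := gap_slope_bound.
exists (fun j => if j == e then c else m j) => x x0.
pose x' := fun j => if j == e then 0 else x j.
have x'0 : supported_below k x'.
  move=> j kj; rewrite /x'; case: eqP => // /eqP je; apply: x0.
  rewrite ltn_neqAle kj andbT; apply: contra je => /eqP kE.
  by apply/eqP/val_inj; rewrite /= kE.
have -> : (fun j => a j + x j) = shift x' (x e).
  apply/funext => j; rewrite /shift /x'; case: eqP => [->|_].
    by rewrite mulr1 addr0.
  by rewrite mulr0 addr0.
have -> : \sum_j (if j == e then c else m j) * x j = \sum_j m j * x' j + c * x e.
  rewrite [LHS](bigD1 e) //= [in RHS](bigD1 e) //= /x' !eqxx mulr0 add0r addrC.
  by congr (_ + _); apply: eq_bigr => j /negbTE ->.
by have := c_bound x' (x e) x'0; rewrite /gap; lra.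
Qed.

End Extension.

Lemma convex_subgradient : exists m, forall x, \sum_j m j * (x j - a j) <= f x - f a.
Proof.
have [m m_sub] : exists m, subgradient_below n m.
  suff : forall k, (k <= n)%N -> exists m, subgradient_below k m by apply.
  elim=> [_|k IHk lt_kn]; first by exists (fun _ => 0); exact: subgradient_below0.
  by have [m m_sub] := IHk (ltnW lt_kn); exact: subgradient_below_succ m_sub.
exists m => x; have := m_sub (fun j => x j - a j).
have -> : (fun j => a j + (x j - a j)) = x by apply/funext => j; rewrite addrC subrK.
by apply=> j; rewrite leqNgt ltn_ord.
Qed.

End ConvexSubgradient.

Section ForwardClosed.
Variable n : nat.
Implicit Types (e : rel 'I_n) (S : {set 'I_n}).

Definition forward_closed e S := forall a b, a \in S -> e a b -> b \in S.

Lemma forward_closed_connect e S x y :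
  forward_closed e S -> x \in S -> connect e x y -> y \in S.
Proof.
move=> S_closed + /connectP [p + ->]; elim: p x => [|z p IHp] x //= xS /andP [exz].
by apply: IHp; exact: S_closed exz.
Qed.

Lemma connect_sub_in e1 e2 S x y : forward_closed e1 S ->
  (forall a b, a \in S -> e1 a b -> e2 a b) -> x \in S -> connect e1 x y -> connect e2 x y.
Proof.
move=> S_closed e12 + /connectP [p + ->]; elim: p x => [|z p IHp] x /= xS.
  by rewrite connect0.
move=> /andP [exz pz]; apply: (connect_trans (connect1 (e12 _ _ xS exz))).
by apply: IHp pz; exact: S_closed exz.
Qed.

Lemma eq_connect_in e1 e2 S x : forward_closed e1 S ->
  (forall a b, a \in S -> e1 a b = e2 a b) -> x \in S -> connect e1 x =1 connect e2 x.
Proof.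
move=> S_closed e12 xS y; apply/idP/idP; apply: connect_sub_in xS => // a b aS.
- by rewrite e12.
- by rewrite -e12 //; exact: S_closed.
- by rewrite e12.
Qed.

(* Take [j] reachable from [i0] with a smallest set of reachable nodes. *)
Lemma exists_terminal_connect e i0 :
  exists2 j, connect e i0 j & forall k, connect e j k -> connect e k j.
Proof.
pose reach j : {set 'I_n} := [set k | connect e j k].
have [j i0j j_min] := arg_minnP (fun j => #|reach j|) (connect0 e i0).
exists j => // k jk; have i0k : connect e i0 k by exact: connect_trans jk.
have /eqP reach_kj : reach k == reach j.
  rewrite eqEcard j_min // andbT.
  by apply/fintype.subsetP => l; rewrite !inE; exact: connect_trans.
have : j \in reach k by rewrite reach_kj inE connect0.
by rewrite inE.
Qed.

End ForwardClosed.

Section RecurrenceClass.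
Variables (R : realType) (n : nat) (M : 'M[R]_n).

Lemma final_set_sum F k (y : 'I_n -> R) : final_set M F -> k \in F ->
  \sum_l M k l * y l = \sum_(l in F) M k l * y l.
Proof.
move=> F_final kF; rewrite [RHS]big_mkcond /=; apply: eq_bigr => l _.
case: ifP => // lF; suff /eqP -> : M k l == 0 by rewrite mul0r.
by apply: contraFT lF => Mkl; exact: F_final kF _.
Qed.

Lemma stochastic_on_sum_const F k c : stochastic_on M F -> k \in F ->
  \sum_(l in F) M k l * c = c.
Proof. by move=> [_ F_sum1] kF; rewrite -mulr_suml F_sum1 // mul1r. Qed.

Lemma row_min_propagates (P : {pred 'I_n}) a b (d : 'I_n -> R) :
  (forall l, l \in P -> 0 <= M a l) -> \sum_(l in P) M a l = 1 ->
  \sum_(l in P) M a l * d l <= d a -> (forall l, l \in P -> d a <= d l) ->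
  b \in P -> M a b != 0 -> d b = d a.
Proof.
move=> M_ge0 M_sum1 d_avg d_min bP Mab.
have terms_ge0 l : l \in P -> 0 <= M a l * (d l - d a).
  by move=> lP; rewrite mulr_ge0 ?subr_ge0 ?M_ge0 ?d_min.
suff /(psumr_eq0P terms_ge0)/(_ b bP)/eqP : \sum_(l in P) M a l * (d l - d a) = 0.
  by rewrite mulf_eq0 (negbTE Mab) subr_eq0 => /eqP.
apply/eqP; rewrite eq_le sumr_ge0 ?andbT //.
under eq_bigr do rewrite mulrBr.
by rewrite sumrB -mulr_suml M_sum1 mul1r subr_le0.
Qed.

(* A minimum of [d] on [F] propagates along the edges of [M], and [F] is
   strongly connected. *)
Lemma recurrence_class_superharmonic_const F (d : 'I_n -> R) : recurrence_class M F ->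
  (forall i, i \in F -> \sum_j M i j * d j <= d i) -> exists c, forall k, k \in F -> d k = c.
Proof.
move=> [[j0 F_def] F_final [M_ge0 M_sum1]] d_super.
have j0F : j0 \in F by rewrite F_def inE connect0.
have [i1 i1F d_min] := @arg_minP _ R _ j0 (mem F) d j0F.
have {}i1F : i1 \in F := i1F.
exists (d i1); pose S := [set k in F | d k == d i1].
have S_closed : forward_closed (mx_graph M) S.
  move=> a b; rewrite !inE => /andP [aF /eqP da] Mab; have bF := F_final _ _ aF Mab.
  rewrite bF /= (@row_min_propagates F a b d) //; first by rewrite da.
  - by move=> l; exact: M_ge0.
  - exact: M_sum1.
  - by rewrite -(final_set_sum _ F_final aF); exact: d_super.
  - by move=> l; rewrite da; exact: d_min.
move=> k kF; have : k \in S.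
  apply: (forward_closed_connect (x := i1) S_closed); first by rewrite inE eqxx andbT.
  by move: i1F kF; rewrite F_def !inE => /andP [_ i1j0] /andP [j0k _]; exact: connect_trans j0k.
by rewrite inE => /andP [_ /eqP].
Qed.

Lemma recurrence_class_in_closed S i0 :
  (forall i j, 0 <= M i j) -> (forall i, \sum_j M i j = 1) ->
  forward_closed (mx_graph M) S -> i0 \in S ->
  exists F i, [/\ recurrence_class M F, i \in F & {subset F <= S}].
Proof.
move=> M_ge0 M_sum1 S_closed i0S.
have [j i0j j_final] := exists_terminal_connect (mx_graph M) i0.
pose F := [set k | connect (mx_graph M) j k && connect (mx_graph M) k j].
have jF : j \in F by rewrite inE connect0.
have F_final : final_set M F.
  move=> a b; rewrite !inE => /andP [ja _] Mab.
  by have jb := connect_trans ja (connect1 Mab); rewrite jb j_final.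
exists F, j; split => //; last first.
  move=> k; rewrite inE => /andP [jk _].
  exact: forward_closed_connect S_closed (forward_closed_connect S_closed i0S i0j) jk.
split => //; first by exists j.
split => // i iF; rewrite -(M_sum1 i).
have := final_set_sum (fun _ => 1) F_final iF.
by under eq_bigr do rewrite mulr1; under [in RHS]eq_bigr do rewrite mulr1.
Qed.

Definition row_patch (F : {set 'I_n}) (M0 : 'M[R]_n) : 'M[R]_n :=
  \matrix_(k, j) if k \in F then M k j else M0 k j.

Lemma recurrence_class_row_patch F M0 :
  recurrence_class M F -> recurrence_class (row_patch F M0) F.
Proof.
move=> [[j0 F_def] F_final [M_ge0 M_sum1]].
have patchE k j : k \in F -> row_patch F M0 k j = M k j by move=> kF; rewrite mxE kF.
have edgeE a b : a \in F -> mx_graph M a b = mx_graph (row_patch F M0) a b.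
  by move=> aF; rewrite /mx_graph patchE.
have connectE := eq_connect_in F_final edgeE.
have j0F : j0 \in F by rewrite F_def inE connect0.
split.
- exists j0; rewrite {1}F_def; apply/setP => b; rewrite !inE -connectE //.
  case j0b: (connect _ j0 b) => //=.
  by rewrite -connectE //; exact: forward_closed_connect j0b.
- by move=> a b aF; rewrite -edgeE //; exact: F_final.
- split=> [a b aF bF|a aF]; first by rewrite patchE //; exact: M_ge0.
  by under eq_bigr => l _ do rewrite patchE //; exact: M_sum1.
Qed.

End RecurrenceClass.

Section CriticalNodes.
Variables (R : realType) (n : nat) (g : ('I_n -> R) -> ('I_n -> R)).
Hypotheses (g_convex : convex_map g) (g_mono : order_preserving g)
  (g_hom : add_homogeneous g).
Variable w : 'I_n -> R.
Hypothesis w_harmonic : is_harmonic g w.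
Notation C := (critical_wrt g w).

Lemma subdiff_exists a : exists M, subdiff g a M.
Proof.
have /choice [m m_sub] : forall i, exists m : 'I_n -> R, forall x,
    \sum_j m j * (x j - a j) <= g x i - g a i.
  by move=> i; apply: (convex_subgradient (f := fun x => g x i)) => t x y; exact: g_convex.
by exists (\matrix_(i, j) m i j) => x i; under eq_bigr do rewrite mxE; exact: m_sub.
Qed.

Lemma subdiff_ge0 a M : subdiff g a M -> forall i j, 0 <= M i j.
Proof.
move=> M_sub i j; pose x k := a k - (k == j)%:R.
have x_le : vle x a by move=> k; rewrite /x lerBlDr lerDl ler0n.
have sum_x : \sum_k M i k * (x k - a k) = - M i j.
  rewrite (bigD1 j) //= big1 ?addr0 => [|k /negbTE kj]; last first.
    by rewrite /x kj subr0 subrr mulr0.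
  by rewrite /x eqxx addrAC subrr sub0r mulrN1.
by have := M_sub x i; have := g_mono x_le i; rewrite sum_x; lra.
Qed.

Lemma subdiff_sum1 a M : subdiff g a M -> forall i, \sum_j M i j = 1.
Proof.
move=> M_sub i.
have sum_const lam : \sum_j M i j * lam <= lam.
  have := M_sub (fun k => lam + a k) i; rewrite g_hom.
  by under eq_bigr do rewrite addrK; rewrite addrK.
by have := sum_const 1; have := sum_const (-1); rewrite -!mulr_suml mulr1 mulrN1; lra.
Qed.

(* [u - w] is [M]-super-harmonic on [F], hence constant there, which forces
   equality in [g u <= u]. *)
Lemma critical_superharmonic_fixed u : is_superharmonic g u -> forall i, C i -> g u i = u i.
Proof.
move=> u_super i [M [F [M_sub F_rec iF]]].
have M_diff k : \sum_j M k j * (u j - w j) <= g u k - w k.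
  by have := M_sub u k; rewrite w_harmonic.
have [c d_const] := recurrence_class_superharmonic_const F_rec
  (fun k _ => le_trans (M_diff k) (lerB (u_super k) (lexx _))).
have [_ F_final F_stoch] := F_rec.
have := M_diff i; rewrite (final_set_sum _ F_final iF).
under eq_bigr => l lF do rewrite d_const //.
rewrite (stochastic_on_sum_const _ F_stoch iF) -(d_const _ iF).
by have := u_super i; lra.
Qed.

(* On [F] the vector [v - w] is [M]-harmonic, so the rows of [M] indexed by [F]
   are also subgradients at [w]. *)
Lemma critical_of_recurrence_class v M (F : {set 'I_n}) i :
  (forall k, k \in F -> g v k = v k) -> subdiff g v M -> recurrence_class M F -> i \in F -> C i.
Proof.
move=> v_fixed M_sub F_rec iF; have [M0 M0_sub] := subdiff_exists w.
have [_ F_final F_stoch] := F_rec.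
pose e j := v j - w j.
have e_super k : k \in F -> \sum_j M k j * - e j <= - e k.
  move=> kF; have := M_sub w k; rewrite w_harmonic v_fixed //.
  by under eq_bigr do rewrite -opprB; rewrite /e opprB.
have [c e_const] := recurrence_class_superharmonic_const F_rec e_super.
have M_e k : k \in F -> \sum_j M k j * e j = e k.
  move=> kF; have eE l : l \in F -> e l = - c by move=> lF; rewrite -(e_const l lF) opprK.
  rewrite (final_set_sum _ F_final kF); under eq_bigr => l lF do rewrite eE //.
  by rewrite (stochastic_on_sum_const _ F_stoch kF) eE.
exists (row_patch M F M0), F; split => //; last exact: recurrence_class_row_patch.
move=> x k; rewrite /row_patch; under eq_bigr do rewrite mxE.
case kF: (k \in F); last exact: M0_sub.
have := M_sub x k; rewrite v_fixed // w_harmonic.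
have -> : \sum_j M k j * (x j - w j) = \sum_j M k j * (x j - v j) + \sum_j M k j * e j.
  by rewrite -big_split; apply: eq_bigr => j _; rewrite /e /=; ring.
by rewrite M_e // /e; lra.
Qed.

(* The maximum of [d] is positive, so it is attained on a set of noncritical
   nodes closed under [M]; such a set contains a recurrence class, which
   [critical_of_recurrence_class] shows to be critical. *)
Lemma critical_max_principle v M (d : 'I_n -> R) : (forall k, ~ C k -> g v k = v k) ->
  subdiff g v M -> (forall i, C i -> d i <= 0) ->
  (forall i, ~ C i -> d i <= \sum_j M i j * d j) -> forall i, d i <= 0.
Proof.
move=> v_fixed M_sub d_C d_sub i; rewrite leNgt; apply/negP => d_gt0.
have M_ge0 := subdiff_ge0 M_sub; have M_sum1 := subdiff_sum1 M_sub.
have [i1 _ d_max] := @arg_maxP _ R _ i predT d isT.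
have dmax_gt0 : 0 < d i1 by apply: lt_le_trans d_gt0 (d_max _ isT).
pose S := [set k | d k == d i1].
have S_noncrit a : a \in S -> ~ C a.
  by rewrite inE => /eqP da /d_C; rewrite da leNgt dmax_gt0.
have S_closed : forward_closed (mx_graph M) S.
  move=> a b aS Mab; have := d_sub a (S_noncrit a aS); move: aS; rewrite !inE => /eqP da.
  move=> d_avg; apply/eqP; rewrite -da -[d b]opprK.
  rewrite (@row_min_propagates _ _ M predT a b (fun l => - d l)) ?opprK //.
  - by under eq_bigr do rewrite mulrN; rewrite sumrN lerN2.
  - by move=> l _; rewrite lerN2 da; exact: d_max.
have i1S : i1 \in S by rewrite inE.
have [F [j [F_rec jF FS]]] := recurrence_class_in_closed M_ge0 M_sum1 S_closed i1S.
apply: (S_noncrit j (FS j jF)); apply: critical_of_recurrence_class M_sub F_rec jF.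
by move=> k kF; apply/v_fixed/S_noncrit/FS.
Qed.

Lemma harmonic_le_superharmonic v y : is_harmonic g v -> is_superharmonic g y ->
  (forall i, C i -> v i <= y i) -> vle v y.
Proof.
move=> v_harm y_super vy_C i; have [M M_sub] := subdiff_exists v.
suff : v i - y i <= 0 by lra.
apply: (@critical_max_principle v M (fun j => v j - y j)) => // [k _|j Cj|j _].
- by rewrite v_harm.
- by have := vy_C j Cj; lra.
- have := M_sub y j; rewrite v_harm.
  have -> : \sum_k M j k * (y k - v k) = - \sum_k M j k * (v k - y k).
    by rewrite -sumrN; apply: eq_bigr => k _; ring.
  by have := y_super j; lra.
Qed.

Lemma fixed_off_critical_le_harmonic v x : is_harmonic g v ->
  (forall i, C i -> x i = v i) -> (forall i, ~ C i -> g x i = x i) -> vle x v.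
Proof.
move=> v_harm xv_C x_fixed i; have [M M_sub] := subdiff_exists x.
suff : x i - v i <= 0 by lra.
apply: (@critical_max_principle x M (fun j => x j - v j)) => // [j /xv_C ->|j Cj].
  by rewrite subrr.
have := M_sub v j; rewrite v_harm x_fixed //.
have -> : \sum_k M j k * (v k - x k) = - \sum_k M j k * (x k - v k).
  by rewrite -sumrN; apply: eq_bigr => k _; ring.
lra.
Qed.

Lemma iter_vle k x y : vle x y -> vle (iter k g x) (iter k g y).
Proof. by elim: k => //= k IHk xy; apply/g_mono/IHk. Qed.

Section Iterates.
Local Open Scope classical_set_scope.
Variable u : 'I_n -> R.
Hypothesis u_super : is_superharmonic g u.

Lemma iter_superharmonic_decr k m : (k <= m)%N -> vle (iter m g u) (iter k g u).
Proof.
move=> /subnKC <-; elim: (m - k)%N => [|p IHp] i; first by rewrite addn0.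
by rewrite addnS iterSr; apply: le_trans (IHp i); exact: iter_vle.
Qed.

(* [w] shifted down by [\sum_j `|w j - u j|] is a harmonic vector below [u]. *)
Lemma iter_superharmonic_lb k i : w i - \sum_j `|w j - u j| <= iter k g u i.
Proof.
set c := \sum_j `|w j - u j|.
have shift_le : vle (fun j => - c + w j) u.
  move=> j; have : w j - u j <= c.
    rewrite /c (bigD1 j) //=; apply: le_trans (ler_norm _) _.
    by rewrite lerDl sumr_ge0.
  lra.
have shift_fixed l : iter l g (fun j => - c + w j) = (fun j => - c + w j).
  by elim: l => //= l ->; rewrite g_hom w_harmonic.
by have := iter_vle k shift_le i; rewrite shift_fixed addrC.
Qed.

Definition iter_limit : 'I_n -> R := fun i => inf (range (fun k => iter k g u i)).

Lemma has_inf_iter i : has_inf (range (fun k => iter k g u i)).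
Proof.
split; first by exists (iter 0 g u i), 0%N.
by exists (w i - \sum_j `|w j - u j|) => _ [k _ <-]; exact: iter_superharmonic_lb.
Qed.

Lemma iter_limit_le k i : iter_limit i <= iter k g u i.
Proof. by apply: ge_inf; [exact: (has_inf_iter i).2 | exists k]. Qed.

Lemma iter_limit_cvg i : (fun k : nat => iter k g u i) @ \oo --> iter_limit i.
Proof.
apply: nonincreasing_cvgn; last exact: (has_inf_iter i).2.
by move=> k m /iter_superharmonic_decr; apply.
Qed.

Lemma iter_limit_approx eps :
  0 < eps -> exists K, forall j, iter K g u j <= iter_limit j + eps.
Proof.
move=> eps_gt0.
have /choice [K K_approx] : forall j, exists k : nat, iter k g u j <= iter_limit j + eps.
  move=> j; have [_ [k _ <-] k_approx] := inf_adherent eps_gt0 (has_inf_iter j).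
  by exists k; exact: ltW.
exists (\max_j K j) => j; apply: le_trans (K_approx j).
by apply: iter_superharmonic_decr; exact: leq_bigmax.
Qed.

Lemma iter_limit_harmonic : is_harmonic g iter_limit.
Proof.
apply/funext => i; apply/le_anti/andP; split.
  apply: lb_le_inf; first by exists (iter 0 g u i), 0%N.
  move=> _ [k _ <-]; apply: le_trans (iter_superharmonic_decr (leqnSn k) i).
  by rewrite iterS; apply: g_mono => j; exact: iter_limit_le.
apply/ler_addgt0Pr => eps eps_gt0; have [K K_approx] := iter_limit_approx eps_gt0.
have : vle (iter K g u) (fun j => eps + iter_limit j) by move=> j; rewrite addrC.
move=> /g_mono /(_ i); rewrite g_hom -iterS => le_K1.
by have := iter_limit_le K.+1 i; lra.
Qed.

Lemma iter_limit_critical i : C i -> iter_limit i = u i.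
Proof.
move=> Ci; have iter_Ci k : iter k g u i = u i.
  elim: k => //= k IHk; rewrite critical_superharmonic_fixed //.
  exact: (iter_superharmonic_decr (leqnSn k)).
apply/le_anti/andP; split; first exact: (iter_limit_le 0).
by apply: lb_le_inf; [exists (iter 0 g u i), 0%N | move=> _ [k _ <-]; rewrite iter_Ci].
Qed.

Lemma iter_limit_superharmonic : is_superharmonic g iter_limit.
Proof. by rewrite /is_superharmonic iter_limit_harmonic => i. Qed.

Lemma iter_limit_le_superharmonic y : is_superharmonic g y ->
  (forall i, C i -> u i <= y i) -> vle iter_limit y.
Proof.
move=> y_super uy_C; apply: harmonic_le_superharmonic iter_limit_harmonic y_super _ => i Ci.
by rewrite iter_limit_critical // uy_C.
Qed.

Lemma eq_iter_limit x : (forall i, C i -> x i = u i) ->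
  (forall i, ~ C i -> g x i = x i) -> x = iter_limit.
Proof.
move=> xu_C x_fixed.
have x_C i : C i -> x i = iter_limit i by move=> Ci; rewrite xu_C // iter_limit_critical.
have x_le := fixed_off_critical_le_harmonic iter_limit_harmonic x_C x_fixed.
have x_super : is_superharmonic g x.
  move=> i; case: (pselect (C i)) => Ci; last by rewrite x_fixed.
  by apply: le_trans (g_mono x_le i) _; rewrite iter_limit_harmonic x_C.
have le_x : vle iter_limit x by apply: iter_limit_le_superharmonic x_super _ => i /xu_C ->.
by apply/funext => i; apply/le_anti; rewrite x_le le_x.
Qed.

Lemma iter_cvg_iff x :
  (forall i, (fun k : nat => iter k g u i) @ \oo --> x i) <-> x = iter_limit.
Proof.
split=> [x_lim|->]; last exact: iter_limit_cvg.
by apply/funext => i; exact: (norm_cvg_unique (x_lim i) (@iter_limit_cvg i)).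
Qed.

Lemma harmonic_critical_iff x :
  (is_harmonic g x /\ (forall i, C i -> x i = u i)) <-> x = iter_limit.
Proof.
split=> [[x_harm xu_C]|->]; last first.
  by split; [exact: iter_limit_harmonic | exact: iter_limit_critical].
by apply: eq_iter_limit => // i _; rewrite x_harm.
Qed.

Lemma fixed_off_critical_iff x : ((forall i, C i -> x i = u i) /\
  (forall i, ~ C i -> g (imath C x u) i = x i)) <-> x = iter_limit.
Proof.
split=> [[xu_C x_fixed]|->].
  by apply: eq_iter_limit => // i nCi; have := x_fixed i nCi; rewrite imath_id.
split=> [i|i _]; first exact: iter_limit_critical.
by rewrite imath_id ?iter_limit_harmonic // => j; exact: iter_limit_critical.
Qed.

Lemma least_superharmonic_iff x : (is_superharmonic g x /\ (forall i, C i -> u i <= x i) /\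
  (forall y, is_superharmonic g y -> (forall i, C i -> u i <= y i) -> vle x y)) <->
  x = iter_limit.
Proof.
have u_le_limit i : C i -> u i <= iter_limit i by move=> Ci; rewrite iter_limit_critical.
split=> [[x_super [ux_C x_least]]|->]; last first.
  split; first exact: iter_limit_superharmonic.
  by split; [exact: u_le_limit | exact: iter_limit_le_superharmonic].
apply/funext => i; apply/le_anti/andP; split; last exact: iter_limit_le_superharmonic.
exact: x_least iter_limit_superharmonic u_le_limit i.
Qed.

End Iterates.
End CriticalNodes.

Local Open Scope classical_set_scope.
Local Open Scope ring_scope.

Theorem theorem3p3 (R : realType) (n : nat) (g : ('I_n -> R) -> ('I_n -> R))
  (gconv : convex_map g) (gmono : order_preserving g)
  (ghom : add_homogeneous g)
  (w : 'I_n -> R) (hw : is_harmonic g w)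
  (u : 'I_n -> R) (hu : is_superharmonic g u) :
  let C := critical_wrt g w in
  exists v : 'I_n -> R, forall x : 'I_n -> R,
    [/\ (* (i) *)
        ((forall i, (fun k : nat => iter k g u i) @ \oo --> x i) <-> x = v),
        (* (ii) *)
        ((is_harmonic g x /\ (forall i, C i -> x i = u i)) <-> x = v),
        (* (iii) *)
        (((forall i, C i -> x i = u i) /\
          (forall i, ~ C i -> g (imath C x u) i = x i)) <-> x = v) &
        (* (iv) *)
        ((is_superharmonic g x /\ (forall i, C i -> u i <= x i) /\
          (forall y, is_superharmonic g y -> (forall i, C i -> u i <= y i) ->
             vle x y)) <-> x = v)].
Proof.
move=> C; exists (iter_limit g u) => x; split.
- exact: (iter_cvg_iff gmono ghom hw hu).
- exact: (harmonic_critical_iff gconv gmono ghom hw hu).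
- exact: (fixed_off_critical_iff gconv gmono ghom hw hu).
- exact: (least_superharmonic_iff gconv gmono ghom hw hu).
Qed.
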